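(* Let $\{x_k\}$ be the random sequence generated by the GSKM algorithm. Take $-1 < \xi \leq 0$ and $0 < \delta < \frac{2(1+\xi)}{1-2\xi}$. Define $\bar{x}_k = \frac{1}{k}\sum_{l=1}^{k} x_l$. Then $$\mathbb{E}[f(\bar{x}_k)] \leq \frac{(1+\xi)(1+\xi-2\delta\xi\mu_2)\, d(x_0,P)^2 + 2\xi\delta(\delta\xi-\delta-1) f(x_0)}{2\delta k(2+2\xi+2\delta\xi-\delta)}.$$
   Context: Linear feasibility problem $Ax \leq b$ with $A \in \mathbb{R}^{m\times n}$, $b \in \mathbb{R}^m$, assumed consistent, with rows $a_i^T$ normalized ($\|a_i\|=1$). $P = \{x : Ax \leq b\}$, $\mathcal{P}(x)$ the Euclidean projection onto $P$, $d(x,P) = \|x-\mathcal{P}(x)\|$. Sampling: at each iteration a set $\tau$ of $\beta$ rows is chosen uniformly at random among all $\binom{m}{\beta}$ subsets and $i^* = \arg\max_{i\in\tau}(a_i^Tx-b_i)^+$; $\mathbb{E}_{\mathbb{S}}$ denotes expectation over this sampling. $f(x) = \mathbb{E}_{\mathbb{S}}\big[\tfrac12|(a_{i^*}^Tx-b_{i^*})^+|^2\big]$. $\mu_2 = \min\{1, \frac{\beta}{m}\lambda_{\max}(A^TA)\}$. GSKM algorithm: $x_1 = x_0$, $z_1 = z_0$; for $k\ge1$, $z_k = x_k - \delta(a_{i^*}^Tx_k-b_{i^*})^+a_{i^*}$ (with $i^*$ chosen by the sampling rule at $x_k$) and $x_{k+1} = (1-\xi)z_k + \xi z_{k-1}$.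 *)

From HB Require Import structures.
From mathcomp Require Import all_boot all_order all_algebra.
From mathcomp Require Import classical_sets reals.
Set Implicit Arguments. Unset Strict Implicit. Unset Printing Implicit Defensive.
Import Order.TTheory GRing.Theory Num.Theory.
Local Open Scope ring_scope.

Section GSKM.
Variables (R : realType) (m n : nat).
Implicit Types (A : 'M[R]_(m, n)) (b : 'cV[R]_m) (x y : 'cV[R]_n).

Definition ppart (r : R) : R := Num.max r 0.

Definition resid A b (i : 'I_m) x : R := (A *m x) i 0 - b i 0.

Definition enorm x : R := Num.sqrt (\sum_j (x j 0) ^+ 2).

Definition feas A b : set 'cV[R]_n := [set y | forall i, (A *m y) i 0 <= b i 0].

Definition distP A b x : R := inf [set enorm (x - y) | y in feas A b].

Definition lmax A : R := sup [set a : R | eigenvalue (A^T *m A) a].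

Definition mu2 A (beta : nat) : R := Num.min 1 (beta%:R / m%:R * lmax A).

Definition is_argmax_sel A b (beta : nat)
  (sel : {set 'I_m} -> 'cV[R]_n -> 'I_m) : Prop :=
  forall (tau : {set 'I_m}) x, #|tau| = beta ->
    sel tau x \in tau /\
    forall i, i \in tau -> ppart (resid A b i x) <= ppart (resid A b (sel tau x) x).

Definition fobj A b (beta : nat) (sel : {set 'I_m} -> 'cV[R]_n -> 'I_m) x : R :=
  ('C(m, beta)%:R)^-1 *
  \sum_(tau : {set 'I_m} | #|tau| == beta)
     (2^-1 * (ppart (resid A b (sel tau x) x)) ^+ 2).

(** one GSKM step: from (x_k, z_{k-1}) and the sample tau_k to (x_{k+1}, z_k) *)
Definition gskm_step A b (sel : {set 'I_m} -> 'cV[R]_n -> 'I_m) (xi delta : R)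
  (tau : {set 'I_m}) (st : 'cV[R]_n * 'cV[R]_n) : 'cV[R]_n * 'cV[R]_n :=
  let: (xk, zprev) := st in
  let i := sel tau xk in
  let zk := xk - (delta * ppart (resid A b i xk)) *: (row i A)^T in
  ((1 - xi) *: zk + xi *: zprev, zk).

(** [gskm_state ... s j] = (x_{j+1}, z_j); sample tau_{j+1} = s j; x_1 = x_0, z_0 = x_0 *)
Fixpoint gskm_state A b sel (xi delta : R) (x0 : 'cV[R]_n)
  (s : nat -> {set 'I_m}) (j : nat) : 'cV[R]_n * 'cV[R]_n :=
  match j with
  | 0 => (x0, x0)
  | j'.+1 => gskm_step A b sel xi delta (s j') (gskm_state A b sel xi delta x0 s j')
  end.

Definition gskm_x A b sel xi delta x0 s (l : nat) : 'cV[R]_n :=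
  (gskm_state A b sel xi delta x0 s l.-1).1.   (* x_l for l >= 1 *)

Definition xbar A b sel xi delta x0 s (k : nat) : 'cV[R]_n :=
  (k%:R)^-1 *: \sum_(1 <= l < k.+1) gskm_x A b sel xi delta x0 s l.

Definition seq_of (k : nat) (t : {ffun 'I_k -> {set 'I_m}}) (j : nat) : {set 'I_m} :=
  oapp t finset.set0 (insub j).

(** E[ g(tau_1, ..., tau_k) ] with tau_l i.i.d. uniform among beta-subsets *)
Definition Eseq (beta k : nat) (g : (nat -> {set 'I_m}) -> R) : R :=
  (('C(m, beta) ^ k)%:R)^-1 *
  \sum_(t : {ffun 'I_k -> {set 'I_m}} | [forall i, #|t i| == beta]) g (seq_of t).

End GSKM.

(* Fix a feasible p and put W(x_k, z_(k-1)) = ||x_k + xi z_(k-1) - (1 + xi) p||^2.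
   Since x_(k+1) + xi z_k = x_k + xi z_(k-1) - delta r_k a_(i_k), with r_k the selected
   positive residual at x_k, feasibility of p gives
     W_(k+1) <= W_k - (2 delta - delta^2) r_k^2 - 2 delta xi r_k (a_(i_k)^T z_(k-1) - b_(i_k)).
   As xi <= 0, the last term is bounded through the residual of the same sample at
   x_(k-1) and the previous step length, using a_i^T a_j >= -1 and AM-GM.  A sample is
   drawn independently of the iterate it acts on, so E[r^2] = 2 E[f], and telescoping
   bounds 2 delta (2 + 2 xi + 2 delta xi - delta) sum_(l<k) E f(x_l) by
   W_1 = (1 + xi)^2 ||x_0 - p||^2 plus a multiple of f(x_0).  The sampled residual is a
   maximum of affine maps, so f is convex along averages and the bound passes to the
   averaged iterate.  Taking the infimum over p yields d(x_0, P)^2. *)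

From HB Require Import structures.
From mathcomp Require Import all_boot all_order all_algebra.
From mathcomp Require Import classical_sets reals boolp.
From mathcomp Require Import ring lra.
Import Order.TTheory GRing.Theory Num.Theory.
Local Open Scope ring_scope.
Set Implicit Arguments. Unset Strict Implicit. Unset Printing Implicit Defensive.

Section SampleExpectation.
Variables (R : realType) (m beta : nat).
Local Notation T := {set 'I_m}.
Local Notation E_ := (@Eseq R m beta).

Definition Edraw (phi : T -> R) : R :=
  ('C(m, beta)%:R)^-1 * \sum_(tau : T | #|tau| == beta) phi tau.

Lemma ler_Edraw (phi1 phi2 : T -> R) :
  (forall tau : T, #|tau| == beta -> phi1 tau <= phi2 tau) -> Edraw phi1 <= Edraw phi2.
Proof.
by move=> phi12; rewrite /Edraw ler_wpM2l ?invr_ge0 ?ler0n //; apply: ler_sum.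
Qed.

Lemma EdrawMl c (phi : T -> R) : Edraw (fun tau => c * phi tau) = c * Edraw phi.
Proof. by rewrite /Edraw -mulr_sumr mulrCA. Qed.

Lemma Edraw_sum K (phi : 'I_K -> T -> R) :
  Edraw (fun tau => \sum_(l < K) phi l tau) = \sum_(l < K) Edraw (phi l).
Proof. by rewrite /Edraw exchange_big mulr_sumr. Qed.

Definition set_sample (s : nat -> T) (k : nat) (tau : T) : nat -> T :=
  fun j => if j == k then tau else s j.

Definition ffun_rcons k (p : {ffun 'I_k -> T} * T) : {ffun 'I_k.+1 -> T} :=
  [ffun i : 'I_k.+1 => oapp p.1 p.2 (insub (val i))].

Definition ffun_unrcons k (t : {ffun 'I_k.+1 -> T}) : {ffun 'I_k -> T} * T :=
  ([ffun j : 'I_k => t (widen_ord (leqnSn k) j)], t ord_max).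

Lemma ffun_rconsK k : cancel (@ffun_rcons k) (@ffun_unrcons k).
Proof.
case=> t tau; rewrite /ffun_unrcons /ffun_rcons; congr pair.
  by apply/ffunP => j; rewrite !ffunE /= valK.
by rewrite ffunE /= insubF // ltnn.
Qed.

Lemma ffun_unrconsK k : cancel (@ffun_unrcons k) (@ffun_rcons k).
Proof.
move=> t; apply/ffunP => i; rewrite /ffun_rcons /ffun_unrcons ffunE /=.
case: insubP => [u _ uE|]; first by rewrite /= ffunE; congr (t _); apply: val_inj.
rewrite -leqNgt => ki; congr (t _); apply: val_inj => /=.
by apply/eqP; rewrite eqn_leq ki -ltnS ltn_ord.
Qed.

Lemma seq_of_rcons k (p : {ffun 'I_k -> T} * T) :
  seq_of (ffun_rcons p) = set_sample (seq_of p.1) k p.2.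
Proof.
apply: funext => j; rewrite /seq_of /set_sample.
case: (ltngtP j k) => [jk | kj | ->].
- rewrite (insubT (fun i => (i < k.+1)%N) (ltnW jk)) (insubT (fun i => (i < k)%N) jk).
  by rewrite /= ffunE /= (insubT (fun i => (i < k)%N) jk).
- by rewrite !insubF // ltnNge ?(ltnW kj) ?kj.
- case: insubP => [u _ uk|]; last by rewrite ltnSn.
  by rewrite /= ffunE /= uk insubF ?ltnn.
Qed.

Lemma forall_card_rcons k (p : {ffun 'I_k -> T} * T) :
  [forall i, #|ffun_rcons p i| == beta] = [forall j, #|p.1 j| == beta] && (#|p.2| == beta).
Proof.
apply/forallP/andP => [H | [/forallP H1 H2] i].
  split; last by move: (H ord_max); rewrite ffunE /= insubF // ltnn.
  by apply/forallP => j; move: (H (widen_ord (leqnSn k) j)); rewrite ffunE /= valK.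
by rewrite ffunE /=; case: insubP => [u _ _|_] /=; [exact: H1 | exact: H2].
Qed.

Lemma EseqS k (G : (nat -> T) -> R) :
  E_ k.+1 G = E_ k (fun s => Edraw (fun tau => G (set_sample s k tau))).
Proof.
rewrite /Eseq /Edraw (reindex (@ffun_rcons k)); last first.
  by apply: onW_bij; exists (@ffun_unrcons k); [exact: ffun_rconsK | exact: ffun_unrconsK].
rewrite (eq_bigl _ _ (@forall_card_rcons k)) (eq_bigr _ (fun p _ => congr1 G (seq_of_rcons p))).
rewrite -(pair_big_dep (fun t : {ffun 'I_k -> T} => [forall j, #|t j| == beta])
   (fun _ (tau : T) => #|tau| == beta) (fun t tau => G (set_sample (seq_of t) k tau))) /=.
rewrite !mulr_sumr; apply: eq_bigr => t _.
by rewrite mulrA; congr (_ * _); rewrite expnS natrM invfM mulrC.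
Qed.

Lemma Eseq0 (G : (nat -> T) -> R) : E_ 0 G = G (fun _ => finset.set0).
Proof.
have ffun0 (t : {ffun 'I_0 -> T}) : t = [ffun=> finset.set0] by apply/ffunP => -[].
rewrite /Eseq expn0 invr1 mul1r (big_pred1 [ffun=> finset.set0]); last first.
  by move=> t; rewrite /= (ffun0 t) eqxx; apply/forallP => -[].
by congr G; apply: funext => j; rewrite /seq_of; case: insubP => // -[].
Qed.

Lemma ler_Eseq k (G1 G2 : (nat -> T) -> R) :
  (forall t : {ffun 'I_k -> T}, [forall i, #|t i| == beta] -> G1 (seq_of t) <= G2 (seq_of t)) ->
  E_ k G1 <= E_ k G2.
Proof.
by move=> G12; rewrite /Eseq ler_wpM2l ?invr_ge0 ?ler0n //; apply: ler_sum => t /G12.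
Qed.

Lemma EseqD k (G1 G2 : (nat -> T) -> R) :
  E_ k (fun s => G1 s + G2 s) = E_ k G1 + E_ k G2.
Proof. by rewrite /Eseq big_split mulrDr. Qed.

Lemma EseqMl k c (G : (nat -> T) -> R) :
  E_ k (fun s => c * G s) = c * E_ k G.
Proof. by rewrite /Eseq -mulr_sumr mulrCA. Qed.

Lemma Eseq_sum k K (G : nat -> (nat -> T) -> R) :
  E_ k (fun s => \sum_(l < K) G l s) = \sum_(l < K) E_ k (G l).
Proof. by rewrite /Eseq exchange_big mulr_sumr. Qed.

Lemma seq_of_card k (t : {ffun 'I_k -> T}) j :
  [forall i, #|t i| == beta] -> (j < k)%N -> #|seq_of t j| = beta.
Proof.
by move=> /forallP tb jk; rewrite /seq_of (insubT (fun i => (i < k)%N) jk); exact/eqP/tb.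
Qed.

Hypothesis beta_le_m : (beta <= m)%N.

Lemma Edraw_cst c : Edraw (fun _ => c) = c.
Proof.
rewrite /Edraw sumr_const.
have -> : #|[pred tau : T | #|tau| == beta]| = 'C(m, beta).
  by rewrite -[in RHS](card_ord m) -(card_draws 'I_m beta) cardsE.
by rewrite -[c *+ _]mulr_natl mulKf // pnatr_eq0 -lt0n bin_gt0.
Qed.

Lemma Eseq_cst k c : E_ k (fun _ => c) = c.
Proof.
elim: k => [|k IH]; first by rewrite Eseq0.
by rewrite EseqS -[RHS]IH; congr (E_ _); apply: funext => s; rewrite Edraw_cst.
Qed.

Definition depends_on_first (H : (nat -> T) -> R) (j : nat) :=
  forall s s', (forall i, (i < j)%N -> s i = s' i) -> H s = H s'.

Lemma Eseq_widen H j K :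
  depends_on_first H j -> (j <= K)%N -> E_ K H = E_ j H.
Proof.
move=> dH /subnKC <-; elim: (K - j)%N => [|d IH]; first by rewrite addn0.
rewrite addnS EseqS -IH; congr (E_ _); apply: funext => s.
rewrite -[RHS]Edraw_cst; congr Edraw; apply: funext => tau; apply: dH => i ij.
by rewrite /set_sample ltn_eqF // ltn_addr.
Qed.

Lemma Eseq_fresh_sample (phi : (nat -> T) -> T -> R) j K :
  (j < K)%N -> (forall tau, depends_on_first (phi ^~ tau) j) ->
  E_ K (fun s => phi s (s j)) = E_ K (fun s => Edraw (phi s)).
Proof.
move=> jK dphi.
have dEphi : depends_on_first (fun s => Edraw (phi s)) j.
  by move=> s s' ss'; congr Edraw; apply: funext => tau; exact: dphi.
have dphij : depends_on_first (fun s => phi s (s j)) j.+1.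
  move=> s s' ss'; rewrite (ss' j (ltnSn j)); apply: dphi => i ij.
  exact/ss'/ltnW.
rewrite (Eseq_widen dphij jK) (Eseq_widen dEphi (ltnW jK)) EseqS.
congr (E_ _); apply: funext => s; congr Edraw; apply: funext => tau.
by rewrite /set_sample eqxx; apply: dphi => i ij; rewrite ltn_eqF.
Qed.

End SampleExpectation.

Section PositivePart.
Variable R : realType.
Implicit Type r : R.

Lemma ppart_ge0 r : 0 <= ppart r.
Proof. by rewrite /ppart le_max lexx orbT. Qed.

Lemma ppart_ge r : r <= ppart r.
Proof. by rewrite /ppart le_max lexx. Qed.

Lemma ppart_mul r : ppart r * r = ppart r ^+ 2.
Proof. by rewrite /ppart; case: (lerP 0 r) => r0; rewrite expr2 ?mul0r. Qed.

Lemma sqr_mean_le K (y : 'I_K -> R) :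
  (K%:R^-1 * \sum_l y l) ^+ 2 <= K%:R^-1 * \sum_l y l ^+ 2.
Proof.
case: K y => [y | K y]; first by rewrite !big_ord0 mulr0 expr0n.
move: K.+1 (ltn0Sn K) y => {}K K0 y; have K0R : 0 < K%:R :> R by rewrite ltr0n.
set a := K%:R^-1 * \sum_l y l.
have sum_y : \sum_l y l = K%:R * a by rewrite /a mulVKf ?gt_eqF.
have : 0 <= \sum_l (y l - a) ^+ 2 by apply: sumr_ge0 => l _; exact: sqr_ge0.
rewrite (eq_bigr (fun l => y l ^+ 2 - (2 * a) * y l + a ^+ 2)); last by move=> l _; ring.
rewrite big_split sumrB /= -mulr_sumr sumr_const card_ord sum_y -mulr_natl => var_ge0.
rewrite -(ler_pM2l K0R) mulVKf ?gt_eqF //.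
clearbody a; nra.
Qed.

Lemma ppart_mean_le K (y : 'I_K -> R) :
  ppart (K%:R^-1 * \sum_l y l) <= K%:R^-1 * \sum_l ppart (y l).
Proof.
have K0 : 0 <= K%:R^-1 :> R by rewrite invr_ge0 ler0n.
rewrite {1}/ppart ge_max; apply/andP; split.
  by apply: ler_wpM2l => //; apply: ler_sum => l _; exact: ppart_ge.
by apply: mulr_ge0 => //; apply: sumr_ge0 => l _; exact: ppart_ge0.
Qed.

End PositivePart.

Section SquaredNorm.
Variables (R : realType) (n : nat).
Implicit Types v : 'cV[R]_n.

Definition sqnorm v : R := \sum_j (v j 0) ^+ 2.

Lemma sqnorm_ge0 v : 0 <= sqnorm v.
Proof. by apply: sumr_ge0 => j _; rewrite sqr_ge0. Qed.

Lemma sqr_enorm v : enorm v ^+ 2 = sqnorm v.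
Proof. by rewrite /enorm sqr_sqrtr // sqnorm_ge0. Qed.

Lemma sqnormZ c v : sqnorm (c *: v) = c ^+ 2 * sqnorm v.
Proof. by rewrite /sqnorm mulr_sumr; apply: eq_bigr => j _; rewrite !mxE exprMn. Qed.

End SquaredNorm.

Section SampledResidual.
Variables (R : realType) (m n : nat) (A : 'M[R]_(m, n)) (b : 'cV[R]_m).
Variables (beta : nat) (sel : {set 'I_m} -> 'cV[R]_n -> 'I_m).

Lemma resid_mean K (v : 'I_K -> 'cV[R]_n) i : (0 < K)%N ->
  resid A b i (K%:R^-1 *: \sum_l v l) = K%:R^-1 * \sum_l resid A b i (v l).
Proof.
move=> K0; rewrite /resid -scalemxAr mulmx_sumr mxE summxE sumrB sumr_const card_ord.
by rewrite mulrBr -[b i 0 *+ K]mulr_natl mulKf // pnatr_eq0 -lt0n.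
Qed.

Definition sres (tau : {set 'I_m}) x : R := ppart (resid A b (sel tau x) x).

Lemma fobjE x : fobj A b beta sel x = Edraw beta (fun tau => 2^-1 * sres tau x ^+ 2).
Proof. by []. Qed.

Lemma fobj_ge0 x : 0 <= fobj A b beta sel x.
Proof.
rewrite /fobj mulr_ge0 ?invr_ge0 ?ler0n //.
by apply: sumr_ge0 => tau _; rewrite mulr_ge0 ?invr_ge0 ?sqr_ge0.
Qed.

Lemma Edraw_sres x : Edraw beta (fun tau => sres tau x ^+ 2) = 2 * fobj A b beta sel x.
Proof.
by rewrite fobjE EdrawMl mulrA divff ?mul1r ?pnatr_eq0.
Qed.

Hypothesis sel_argmax : is_argmax_sel A b beta sel.

Lemma sres_sqr_mean_le K (v : 'I_K -> 'cV[R]_n) (tau : {set 'I_m}) : (0 < K)%N -> #|tau| = beta ->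
  sres tau (K%:R^-1 *: \sum_l v l) ^+ 2 <= K%:R^-1 * \sum_l sres tau (v l) ^+ 2.
Proof.
move=> K0 taub; have K0R : 0 <= K%:R^-1 :> R by rewrite invr_ge0 ler0n.
have mean_le : sres tau (K%:R^-1 *: \sum_l v l) <= K%:R^-1 * \sum_l sres tau (v l).
  rewrite {1}/sres resid_mean //; apply: le_trans (ppart_mean_le _) _.
  apply: ler_wpM2l => //; apply: ler_sum => l _; rewrite /sres.
  have [_ max_sel] := sel_argmax (v l) taub; apply: max_sel.
  by have [] := sel_argmax (K%:R^-1 *: \sum_l0 v l0) taub.
apply: le_trans (sqr_mean_le _); rewrite ler_sqr ?nnegrE ?ppart_ge0 //.
by rewrite mulr_ge0 // sumr_ge0 // => l _; exact: ppart_ge0.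
Qed.

Lemma fobj_mean_le K (v : 'I_K -> 'cV[R]_n) : (0 < K)%N ->
  fobj A b beta sel (K%:R^-1 *: \sum_l v l) <= K%:R^-1 * \sum_l fobj A b beta sel (v l).
Proof.
move=> K0; rewrite (eq_bigr _ (fun l _ => fobjE (v l))) -Edraw_sum -EdrawMl fobjE.
apply: ler_Edraw => tau /eqP taub; rewrite -mulr_sumr [leRHS]mulrCA.
by apply: ler_wpM2l; [rewrite invr_ge0 ler0n | exact: sres_sqr_mean_le].
Qed.

End SampledResidual.

Section Rows.
Variables (R : realType) (m n : nat) (A : 'M[R]_(m, n)) (b : 'cV[R]_m).

Lemma resid_sub_row x i i' c :
  resid A b i (x - c *: (row i' A)^T) = resid A b i x - c * \sum_j A i j * A i' j.
Proof.
rewrite /resid mulmxBr -scalemxAr !mxE -addrA [_ - b i 0]addrC addrA; congr (_ + _).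
by congr (- (c * _)); apply: eq_bigr => j _; rewrite !mxE.
Qed.

Hypothesis unit_rows : forall i, \sum_j A i j ^+ 2 = 1.

Lemma sqnorm_sub_row (v : 'cV[R]_n) i c :
  sqnorm (v - c *: (row i A)^T) = sqnorm v - 2 * c * (A *m v) i 0 + c ^+ 2.
Proof.
have -> : c ^+ 2 = \sum_j c ^+ 2 * A i j ^+ 2 by rewrite -mulr_sumr unit_rows mulr1.
rewrite /sqnorm mxE mulr_sumr -sumrB -big_split /=.
by apply: eq_bigr => j _; rewrite !mxE; ring.
Qed.

Lemma row_dot_ge (i i' : 'I_m) : -1 <= \sum_j A i j * A i' j.
Proof.
have : 0 <= \sum_j (A i j + A i' j) ^+ 2 by apply: sumr_ge0 => j _; exact: sqr_ge0.
rewrite (eq_bigr (fun j => A i j ^+ 2 + A i' j ^+ 2 + 2 * (A i j * A i' j))); last first.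
  by move=> j _; ring.
rewrite !big_split /= !unit_rows -mulr_sumr; lra.
Qed.

End Rows.

Lemma mulmx_trmx_diag_ge0 (R : realType) k l (u : 'M[R]_(k, l)) i : 0 <= (u *m u^T) i i.
Proof. by rewrite mxE sumr_ge0 // => j _; rewrite mxE -expr2 sqr_ge0. Qed.

Lemma eigenvalue_trmx_mul_ge0 (R : realType) m n (A : 'M[R]_(m, n)) a :
  eigenvalue (A^T *m A) a -> 0 <= a.
Proof.
case/eigenvalueP => v vAA v0.
have quad : ((v *m A^T) *m (v *m A^T)^T) 0 0 = a * (v *m v^T) 0 0.
  by rewrite trmx_mul trmxK mulmxA -[_ *m A]mulmxA vAA -scalemxAl mxE.
have vv_gt0 : 0 < (v *m v^T) 0 0.
  rewrite lt_def mulmx_trmx_diag_ge0 andbT; apply: contra v0 => /eqP vv0.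
  apply/eqP/rowP => j; rewrite mxE; apply/eqP; rewrite -sqrf_eq0.
  have vj_ge0 j' : true -> 0 <= v 0 j' * v^T j' 0 by rewrite mxE -expr2 sqr_ge0.
  move: vv0; rewrite mxE => vv0.
  by have := @psumr_eq0P _ _ _ _ vj_ge0 vv0 j isT; rewrite mxE -expr2 => ->.
by rewrite -(pmulr_lge0 _ vv_gt0) -quad mulmx_trmx_diag_ge0.
Qed.

Lemma lmax_ge0 (R : realType) m n (A : 'M[R]_(m, n)) : 0 <= lmax A.
Proof.
rewrite /lmax; set S := (X in sup X).
have [supS | /sup_out -> //] := pselect (has_sup S).
have [[a Sa] _] := supS.
exact: le_trans (eigenvalue_trmx_mul_ge0 Sa) (sup_upper_bound supS Sa).
Qed.

Lemma mu2_ge0 (R : realType) m n (A : 'M[R]_(m, n)) beta : 0 <= mu2 A beta.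
Proof. by rewrite /mu2 le_min ler01 mulr_ge0 ?divr_ge0 ?lmax_ge0. Qed.

Lemma le_sqr_distP (R : realType) m n (A : 'M[R]_(m, n)) b x q :
  (exists y, feas A b y) -> (forall p, feas A b p -> q <= enorm (x - p) ^+ 2) ->
  q <= distP A b x ^+ 2.
Proof.
move=> [y Py] q_le; have [q_le0 | q_gt0] := lerP q 0.
  exact: le_trans q_le0 (sqr_ge0 _).
have sqrtq_le : Num.sqrt q <= distP A b x.
  apply: lb_le_inf; first by exists (enorm (x - y)), y.
  move=> _ [p Pp <-]; rewrite /enorm ler_sqrt; last exact: (sqnorm_ge0 (x - p)).
  by have := q_le p Pp; rewrite sqr_enorm.
have d_ge0 : 0 <= distP A b x := le_trans (sqrtr_ge0 q) sqrtq_le.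
by rewrite -(sqr_sqrtr (ltW q_gt0)) ler_sqr ?nnegrE ?sqrtr_ge0.
Qed.

Section Lyapunov.
Variables (R : realType) (m n : nat) (A : 'M[R]_(m, n)) (b : 'cV[R]_m).
Hypothesis unit_rows : forall i, \sum_j A i j ^+ 2 = 1.
Variables (beta : nat) (sel : {set 'I_m} -> 'cV[R]_n -> 'I_m) (xi delta : R).
Hypotheses (xi_gtN1 : -1 < xi) (xi_le0 : xi <= 0) (delta_gt0 : 0 < delta).
Variable p : 'cV[R]_n.
Hypothesis p_feas : feas A b p.

Local Notation step := (gskm_step A b sel xi delta).
Local Notation sres := (sres A b sel).

Definition lyap (st : 'cV[R]_n * 'cV[R]_n) : R := sqnorm (st.1 + xi *: st.2 - (1 + xi) *: p).

Lemma lyap_diag x : lyap (x, x) = (1 + xi) ^+ 2 * enorm (x - p) ^+ 2.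
Proof.
rewrite /lyap sqr_enorm -sqnormZ; congr sqnorm.
by apply/matrixP => j k; rewrite !mxE; ring.
Qed.

Lemma lyap_step st tau :
  lyap (step tau st) <= lyap st - (2 * delta - delta ^+ 2) * sres tau st.1 ^+ 2
    - 2 * delta * xi * (sres tau st.1 * resid A b (sel tau st.1) st.2).
Proof.
case: st => x z /=; set i := sel tau x; set r := sres tau x.
have step_dir : (step tau (x, z)).1 + xi *: (step tau (x, z)).2 - (1 + xi) *: p
    = (x + xi *: z - (1 + xi) *: p) - (delta * r) *: (row i A)^T.
  by apply/matrixP => j k; rewrite /r /sres !mxE; ring.
have A_dir : (A *m (x + xi *: z - (1 + xi) *: p)) i 0
    = resid A b i x + xi * resid A b i z + (1 + xi) * (b i 0 - (A *m p) i 0).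
  by rewrite /resid mulmxBr mulmxDr -!scalemxAr !mxE; ring.
have r_resid : delta * (r * resid A b i x) = delta * r ^+ 2 by rewrite ppart_mul.
have slack_ge0 : 0 <= delta * r * ((1 + xi) * (b i 0 - (A *m p) i 0)).
  have xi1_ge0 : 0 <= 1 + xi by move: xi_gtN1; lra.
  by rewrite !mulr_ge0 ?ppart_ge0 ?subr_ge0 ?(ltW delta_gt0) ?(p_feas i).
rewrite /lyap step_dir sqnorm_sub_row // A_dir.
lra.
Qed.

Lemma lyap_first_step x tau :
  lyap (step tau (x, x)) <= lyap (x, x) - (2 * delta * (1 + xi) - delta ^+ 2) * sres tau x ^+ 2.
Proof.
have := lyap_step (x, x) tau; rewrite /= -[_ * resid _ _ _ _]/(ppart _ * _) ppart_mul.
rewrite -/(sres tau x); lra.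
Qed.

Hypothesis sel_argmax : is_argmax_sel A b beta sel.

Lemma resid_prev_step_le st tau' (tau : {set 'I_m}) i : i \in tau -> #|tau| = beta ->
  resid A b i (step tau' st).2 <= sres tau st.1 + delta * sres tau' st.1.
Proof.
case: st => x z /= i_tau taub; rewrite resid_sub_row; apply: lerD.
  apply: le_trans (ppart_ge _) _.
  by have [_ /(_ i i_tau)] := sel_argmax x taub.
rewrite -/(sres tau' x) -mulrN -[X in _ <= X]mulr1.
apply: ler_wpM2l; first by rewrite mulr_ge0 ?ppart_ge0 ?ltW.
by rewrite lerNl row_dot_ge.
Qed.

Lemma lyap_step_lag st tau' (tau : {set 'I_m}) : #|tau| = beta ->
  lyap (step tau (step tau' st)) <= lyap (step tau' st)
    - (2 * delta - delta ^+ 2) * sres tau (step tau' st).1 ^+ 2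
    - delta * xi * ((1 + delta) * sres tau (step tau' st).1 ^+ 2 + sres tau st.1 ^+ 2
                    + delta * sres tau' st.1 ^+ 2).
Proof.
move=> taub; set r := sres tau _; set M := sres tau st.1; set r' := sres tau' st.1.
have sel_tau : sel tau (step tau' st).1 \in tau by have [] := sel_argmax (step tau' st).1 taub.
have resid_le := resid_prev_step_le st tau' sel_tau taub.
have r_ge0 : 0 <= r := ppart_ge0 _.
have dxi_ge0 : 0 <= - (2 * delta * xi) by move: delta_gt0 xi_le0; nra.
have lag_le : - (2 * delta * xi) * (r * resid A b (sel tau (step tau' st).1) (step tau' st).2)
    <= - (2 * delta * xi) * (r * (M + delta * r')).
  by apply: ler_wpM2l => //; apply: ler_wpM2l.
have amgm : 2 * (r * (M + delta * r')) <= r ^+ 2 + M ^+ 2 + delta * (r ^+ 2 + r' ^+ 2).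
  have := sqr_ge0 (r - M); have := sqr_ge0 (r - r'); move: delta_gt0; nra.
have := lyap_step (step tau' st) tau; rewrite -/r.
move: xi_le0 delta_gt0; nra.
Qed.

Variable x0 : 'cV[R]_n.
Hypothesis beta_le_m : (beta <= m)%N.
Local Notation state s j := (gskm_state A b sel xi delta x0 s j).
Local Notation E_ := (@Eseq R m beta).
Local Notation f := (fobj A b beta sel).

Lemma state_prefix j s s' : (forall i, (i < j)%N -> s i = s' i) -> state s j = state s' j.
Proof. by elim: j => [//|j IH] ss' /=; rewrite IH ?ss' // => i ij; exact/ss'/ltnW. Qed.

Lemma Eseq_sres_sqr l j K : (l <= j)%N -> (j < K)%N ->
  E_ K (fun s => sres (s j) (state s l).1 ^+ 2) = 2 * E_ K (fun s => f (state s l).1).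
Proof.
move=> lj jK; rewrite -EseqMl.
rewrite (@Eseq_fresh_sample _ _ _ beta_le_m (fun s tau => sres tau (state s l).1 ^+ 2)) //.
  by congr (E_ _); apply: funext => s; rewrite Edraw_sres.
move=> tau s s' ss'; rewrite (@state_prefix l s s') // => i il.
exact/ss'/(leq_trans il lj).
Qed.

Local Notation rate := (2 + 2 * xi + 2 * delta * xi - delta).

Lemma Eseq_lyap_telescope K j : (j < K)%N ->
  E_ K (fun s => lyap (state s j.+1)) - 2 * delta * xi * (1 + delta) * E_ K (fun s => f (state s j).1)
  + 2 * delta * rate * \sum_(0 <= l < j.+1) E_ K (fun s => f (state s l).1)
  <= lyap (x0, x0) - 2 * delta * xi * (1 - delta) * f x0.
Proof.
have Elyap0 : E_ K (fun s => lyap (state s 0)) = lyap (x0, x0) := Eseq_cst beta_le_m K (lyap (x0, x0)).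
have Ef0 : E_ K (fun s => f (state s 0).1) = f x0 := Eseq_cst beta_le_m K (f x0).
elim: j => [|j IH] jK.
  have step1 : E_ K (fun s => lyap (state s 1)) <= E_ K (fun s => lyap (state s 0)
      + (- (2 * delta * (1 + xi) - delta ^+ 2)) * sres (s 0) (state s 0).1 ^+ 2).
    by apply: ler_Eseq => t _; have := lyap_first_step x0 (seq_of t 0); lra.
  rewrite EseqD EseqMl Eseq_sres_sqr // Elyap0 Ef0 in step1.
  rewrite big_nat1 Ef0; lra.
have step : E_ K (fun s => lyap (state s j.+2)) <= E_ K (fun s => lyap (state s j.+1)
    + (- (2 * delta - delta ^+ 2) - delta * xi * (1 + delta)) * sres (s j.+1) (state s j.+1).1 ^+ 2
    + (- (delta * xi)) * sres (s j.+1) (state s j).1 ^+ 2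
    + (- (delta ^+ 2 * xi)) * sres (s j) (state s j).1 ^+ 2).
  apply: ler_Eseq => t tb.
  by have := lyap_step_lag (state (seq_of t) j) (seq_of t j) (seq_of_card tb jK); lra.
rewrite !EseqD !EseqMl !Eseq_sres_sqr ?(ltnW jK) // in step.
have IHj := IH (ltnW jK); rewrite big_nat_recr //=; lra.
Qed.

Lemma xbarE s K : xbar A b sel xi delta x0 s K = K%:R^-1 *: \sum_(l < K) (state s l).1.
Proof. by rewrite /xbar big_add1 big_mkord. Qed.

Lemma Eseq_fobj_xbar_le K : (0 < K)%N -> 0 < rate ->
  E_ K (fun s => f (xbar A b sel xi delta x0 s K))
  <= (lyap (x0, x0) - 2 * delta * xi * (1 - delta) * f x0) / (2 * delta * K%:R * rate).
Proof.
move=> K0 rate_gt0; have K0R : 0 < K%:R :> R by rewrite ltr0n.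
have := @Eseq_lyap_telescope K K.-1; rewrite prednK // => /(_ (leqnn K)).
set EL := E_ K _; set EF := E_ K _; set S := \sum_(0 <= l < K) _ => tele.
have EL_ge0 : 0 <= EL.
  by rewrite -(Eseq_cst beta_le_m K 0); apply: ler_Eseq => t _; exact: sqnorm_ge0.
have EF_term_ge0 : 0 <= - (2 * delta * xi * (1 + delta)) * EF.
  rewrite mulr_ge0 //; first by move: delta_gt0 xi_le0; nra.
  by rewrite -(Eseq_cst beta_le_m K 0); apply: ler_Eseq => t _; exact: fobj_ge0.
set E := E_ K _.
have EK_le : E * K%:R <= S.
  rewrite -ler_pdivlMr // mulrC /S big_mkord.
  rewrite -(Eseq_sum beta K K (fun l s => f (state s l).1)) -EseqMl.
  by apply: ler_Eseq => t _; rewrite xbarE; exact: fobj_mean_le.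
have c_gt0 : 0 < 2 * delta * rate by rewrite !mulr_gt0.
have := ler_wpM2l (ltW c_gt0) EK_le.
by rewrite ler_pdivlMr ?mulr_gt0 //; lra.
Qed.

End Lyapunov.

Lemma gskm_rate_gt0 (R : realType) (xi delta : R) :
  xi <= 0 -> delta < 2 * (1 + xi) / (1 - 2 * xi) -> 0 < 2 + 2 * xi + 2 * delta * xi - delta.
Proof.
move=> xi_le0; have den_gt0 : 0 < 1 - 2 * xi by lra.
by rewrite ltr_pdivlMr //; lra.
Qed.

Lemma weaken_lyapunov_bound (R : realType) (xi delta mu d f0 E D : R) :
  -1 < xi -> xi <= 0 -> 0 < delta -> 0 <= mu -> 0 <= f0 -> 0 < D ->
  E * D + 2 * delta * xi * (1 - delta) * f0 <= d ^+ 2 * (1 + xi) ^+ 2 ->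
  E <= ((1 + xi) * (1 + xi - 2 * delta * xi * mu) * d ^+ 2
        + 2 * xi * delta * (delta * xi - delta - 1) * f0) / D.
Proof.
move=> xi_gtN1 xi_le0 delta_gt0 mu_ge0 f0_ge0 D_gt0 bound.
have mu_term : 0 <= - xi * delta * (1 + xi) * mu * d ^+ 2.
  by rewrite mulr_ge0 ?sqr_ge0 // !mulr_ge0 ?(ltW delta_gt0) //; lra.
have f0_term : 0 <= delta ^+ 2 * (xi * (xi - 2)) * f0.
  by apply: mulr_ge0 f0_ge0; rewrite mulr_ge0 ?sqr_ge0 //; nra.
by rewrite ler_pdivlMr //; lra.
Qed.

Theorem theorem5 (R : realType) (m n : nat) (A : 'M[R]_(m, n)) (b : 'cV[R]_m)
  (beta : nat) (sel : {set 'I_m} -> 'cV[R]_n -> 'I_m)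
  (xi delta : R) (x0 : 'cV[R]_n) (k : nat) :
  (forall i : 'I_m, \sum_j (A i j) ^+ 2 = 1) ->
  (exists y : 'cV[R]_n, forall i, (A *m y) i 0 <= b i 0) ->
  (1 <= beta <= m)%N ->
  is_argmax_sel A b beta sel ->
  -1 < xi -> xi <= 0 ->
  0 < delta -> delta < 2 * (1 + xi) / (1 - 2 * xi) ->
  (1 <= k)%N ->
  Eseq beta k (fun s => fobj A b beta sel (xbar A b sel xi delta x0 s k))
  <= ((1 + xi) * (1 + xi - 2 * delta * xi * mu2 A beta) * (distP A b x0) ^+ 2
      + 2 * xi * delta * (delta * xi - delta - 1) * fobj A b beta sel x0)
     / (2 * delta * k%:R * (2 + 2 * xi + 2 * delta * xi - delta)).
Proof.
move=> unit_rows feas_ne /andP[_ beta_le_m] sel_argmax xi_gtN1 xi_le0 delta_gt0 delta_lt k_gt0.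
have rate_gt0 := gskm_rate_gt0 xi_le0 delta_lt.
have xi1_gt0 : 0 < (1 + xi) ^+ 2 by rewrite exprn_gt0 //; lra.
apply: weaken_lyapunov_bound; rewrite ?mu2_ge0 ?fobj_ge0 ?mulr_gt0 ?ltr0n //.
rewrite -ler_pdivrMr //; apply: le_sqr_distP feas_ne _ => p p_feas.
have := Eseq_fobj_xbar_le unit_rows xi_gtN1 xi_le0 delta_gt0 p_feas sel_argmax x0
  beta_le_m k_gt0 rate_gt0.
by rewrite lyap_diag ler_pdivlMr ?mulr_gt0 ?ltr0n // ler_pdivrMr //; lra.
Qed.
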